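(* Let $N\ge1$ and suppose the parameter space $\Theta$ of the correlated Bernoulli random graph model is nondegenerate and satisfies $\Theta\subseteq\mathcal{R}^o$ (all $\varrho_i=0$). Then the statistic $$\mathfrak{d}_{X,Y}\left(1-\mathfrak{d}_{X,Y}\right)-\frac{1}{2N}\left(1-\frac{1}{2N}\right)\Delta$$ is the UMVU estimator of $\sigma^2=\frac1N\sum_{i=1}^N(p_i-\mu)^2$, where $\mu=\frac1N\sum_{i=1}^Np_i$.
   Context: Correlated Bernoulli random graph model: fix a positive integer $N$ and let $\mathcal{R}=\{(p_1,\dots,p_N,\varrho_1,\dots,\varrho_N): p_i,\varrho_i\in[0,1]\}$; a parameter space is any $\Theta\subseteq\mathcal{R}$. For $\theta\in\Theta$, the pairs $(X_i,Y_i)$, $i=1,\dots,N$, of $\{0,1\}$-valued random variables are independent, $X_i,Y_i$ are marginally Bernoulli$(p_i)$ with Pearson correlation $\varrho_i$. Sample space $\mathcal{X}=\{(x,y):x,y\in\{0,1\}^N\}$. Let $\mathcal{R}^o=\{(p_1,\dots,p_N,0,\dots,0):p_i\in\mathbb{R}\}$; $\Theta$ is nondegenerate if $\Theta\cap\mathcal{R}^o$ has an interior point relative to $\mathcal{R}^o$. Statistics: $\mathfrak{d}_X=\frac1N\sum_iX_i$, $\mathfrak{d}_Y=\frac1N\sum_iY_i$, $\mathfrak{d}_{X,Y}=\frac12(\mathfrak{d}_X+\mathfrak{d}_Y)$, and $\Delta=\sum_{i=1}^N(X_i-Y_i)^2$ (number of coordinates where $x$ and $y$ disagree). UMVU means unbiased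 (expectation equals the target for every $\theta\in\Theta$) with minimum variance among all unbiased estimators for every $\theta\in\Theta$. *)

From HB Require Import structures.
From mathcomp Require Import all_boot all_order all_algebra.
From mathcomp Require Import reals.
Set Implicit Arguments. Unset Strict Implicit. Unset Printing Implicit Defensive.
Import Order.TTheory GRing.Theory Num.Theory.
Local Open Scope ring_scope.

(* A parameter theta = (p, rho) with p, rho : 'I_N -> R. *)
Definition param (R : realType) (N : nat) : Type := (('I_N -> R) * ('I_N -> R))%type.

Definition sample (N : nat) : finType :=
  ({ffun 'I_N -> bool} * {ffun 'I_N -> bool})%type.

Definition in_Rspace (R : realType) (N : nat) (th : param R N) : Prop :=
  forall i, 0 <= th.1 i <= 1 /\ 0 <= th.2 i <= 1.

(* Joint pmf of a {0,1}-valued pair, both marginals Bernoulli(p),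
   Pearson correlation rho. *)
Definition pair_pmf (R : realType) (p rho : R) (a b : bool) : R :=
  match a, b with
  | true, true => p ^+ 2 + rho * p * (1 - p)
  | true, false | false, true => p * (1 - p) * (1 - rho)
  | false, false => (1 - p) ^+ 2 + rho * p * (1 - p)
  end.

Definition model_pmf (R : realType) (N : nat) (th : param R N) (s : sample N) : R :=
  \prod_(i < N) pair_pmf (th.1 i) (th.2 i) (s.1 i) (s.2 i).

Definition Exp (R : realType) (N : nat) (th : param R N) (T : sample N -> R) : R :=
  \sum_(s : sample N) model_pmf th s * T s.

Definition Var (R : realType) (N : nat) (th : param R N) (T : sample N -> R) : R :=
  Exp th (fun s => (T s - Exp th T) ^+ 2).

Definition unbiased (R : realType) (N : nat) (Theta : param R N -> Prop)
  (T : sample N -> R) (g : param R N -> R) : Prop :=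
  forall th, Theta th -> Exp th T = g th.

Definition UMVU (R : realType) (N : nat) (Theta : param R N -> Prop)
  (T : sample N -> R) (g : param R N -> R) : Prop :=
  unbiased Theta T g /\
  forall T' : sample N -> R, unbiased Theta T' g ->
    forall th, Theta th -> Var th T <= Var th T'.

(* Theta is nondegenerate: Theta ∩ R^o has an interior point relative to R^o,
   where R^o = {(p, 0) : p in R^N}. *)
Definition nondegenerate_param (R : realType) (N : nat) (Theta : param R N -> Prop) : Prop :=
  exists (p0 : 'I_N -> R) (eps : R), 0 < eps /\
    forall p : 'I_N -> R, (forall i, `|p i - p0 i| < eps) -> Theta (p, fun _ => 0).

Definition bnat (R : realType) (b : bool) : R := (nat_of_bool b)%:R.

Definition dX (R : realType) (N : nat) (s : sample N) : R :=
  N%:R^-1 * \sum_(i < N) bnat R (s.1 i).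
Definition dY (R : realType) (N : nat) (s : sample N) : R :=
  N%:R^-1 * \sum_(i < N) bnat R (s.2 i).
Definition dXY (R : realType) (N : nat) (s : sample N) : R :=
  2^-1 * (dX R s + dY R s).
Definition Delta (R : realType) (N : nat) (s : sample N) : R :=
  \sum_(i < N) (bnat R (s.1 i) - bnat R (s.2 i)) ^+ 2.

Definition mu (R : realType) (N : nat) (th : param R N) : R :=
  N%:R^-1 * \sum_(i < N) th.1 i.
Definition sigma2 (R : realType) (N : nat) (th : param R N) : R :=
  N%:R^-1 * \sum_(i < N) (th.1 i - mu th) ^+ 2.

Definition T_est (R : realType) (N : nat) (s : sample N) : R :=
  dXY R s * (1 - dXY R s)
  - (2 * N%:R)^-1 * (1 - (2 * N%:R)^-1) * Delta R s.

From HB Require Import structures.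
From mathcomp Require Import all_boot all_order all_algebra.
From mathcomp Require Import reals ring lra.
Set Implicit Arguments. Unset Strict Implicit. Unset Printing Implicit Defensive.
Import Order.TTheory GRing.Theory Num.Theory.
Local Open Scope ring_scope.

(* With every correlation zero, x_i and y_i are independent Bernoulli(p_i), so
   the law is invariant under swapping x_i and y_i and the counts
   z_i = x_i + y_i form a sufficient statistic.  The estimator is a function of
   the z_i, and a moment computation shows it is unbiased.  The z_i are
   complete: the expectation of a function of them is quadratic in each p_i
   separately, so if it vanishes on an open box then, one coordinate at a time,
   all its Bernstein coefficients vanish.  Lehmann-Scheffe then concludes:
   averaging an unbiased T' over the swaps yields an unbiased function of the
   z_i, hence the estimator itself, and this averaging is an orthogonal
   projection in L^2, so it cannot increase the variance. *)

Section Expectation.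
Variables (R : realType) (N : nat).
Implicit Types (th : param R N) (f g : sample N -> R).

Lemma eq_Exp th f g : f =1 g -> Exp th f = Exp th g.
Proof. by move=> fg; apply: eq_bigr => s _; rewrite fg. Qed.

Lemma ExpD th f g : Exp th (fun s => f s + g s) = Exp th f + Exp th g.
Proof. by rewrite /Exp -big_split; apply: eq_bigr => s _; rewrite mulrDr. Qed.

Lemma ExpB th f g : Exp th (fun s => f s - g s) = Exp th f - Exp th g.
Proof. by rewrite /Exp -sumrB; apply: eq_bigr => s _; rewrite mulrBr. Qed.

Lemma ExpZ th c f : Exp th (fun s => c * f s) = c * Exp th f.
Proof. by rewrite /Exp mulr_sumr; apply: eq_bigr => s _; rewrite mulrCA. Qed.

Lemma Exp_sum th (I : finType) (F : I -> sample N -> R) :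
  Exp th (fun s => \sum_i F i s) = \sum_i Exp th (F i).
Proof. by rewrite /Exp exchange_big; apply: eq_bigr => s _; rewrite mulr_sumr. Qed.

Lemma pair_pmf_ge0 (p rho : R) a b :
  0 <= p <= 1 -> 0 <= rho <= 1 -> 0 <= pair_pmf p rho a b.
Proof.
move=> /andP[p_ge0 p_le1] /andP[rho_ge0 rho_le1].
have q_ge0 : 0 <= 1 - p by rewrite subr_ge0.
have prq_ge0 : 0 <= rho * p * (1 - p) by rewrite !mulr_ge0.
by case: a; case: b; rewrite /= ?addr_ge0 ?exprn_ge0 ?mulr_ge0 ?subr_ge0.
Qed.

Lemma model_pmf_ge0 th s : in_Rspace th -> 0 <= model_pmf th s.
Proof.
move=> th_R; apply: prodr_ge0 => i _.
by have [] := th_R i; apply: pair_pmf_ge0.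
Qed.

(* Pythagoras: here Var T' = Var T + E (T' - T)^2. *)
Lemma Var_le_of_orthogonal th (T T' : sample N -> R) :
  (forall s, 0 <= model_pmf th s) ->
  Exp th T' = Exp th T ->
  Exp th (fun s => T' s * (T s - Exp th T)) =
    Exp th (fun s => T s * (T s - Exp th T)) ->
  Var th T <= Var th T'.
Proof.
move=> pmf_ge0 ET' orth; rewrite /Var ET'.
set m := Exp th T.
have -> : Exp th (fun s => (T' s - m) ^+ 2) =
    Exp th (fun s => (T' s - T s) ^+ 2) + Exp th (fun s => (T s - m) ^+ 2)
    + 2 * (Exp th (fun s => T' s * (T s - m)) - Exp th (fun s => T s * (T s - m))).
  rewrite -ExpB -ExpZ -!ExpD; apply: eq_Exp => s; ring.
rewrite orth subrr mulr0 addr0 lerDr.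
by apply: sumr_ge0 => s _; rewrite mulr_ge0 ?sqr_ge0.
Qed.

End Expectation.

Section Swaps.
Variables (R : realType) (N : nat).
Implicit Types (th : param R N) (s t : sample N) (u v : {ffun 'I_N -> bool}).

Definition zcount s (i : 'I_N) : nat := s.1 i + s.2 i.

Definition zcount_invariant (F : sample N -> R) :=
  forall s t, zcount s =1 zcount t -> F s = F t.

Definition swap u s : sample N :=
  ([ffun i => if u i then s.2 i else s.1 i], [ffun i => if u i then s.1 i else s.2 i]).

Lemma swapK u : involutive (swap u).
Proof.
by move=> [x y]; congr pair; apply/ffunP => i; rewrite !ffunE; case: (u i).
Qed.

Lemma swap_comp u v s : swap v (swap u s) = swap [ffun i => u i (+) v i] s.
Proof.
by congr pair; apply/ffunP => i; rewrite !ffunE; case: (u i); case: (v i).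
Qed.

Lemma model_pmf_swap th u s : model_pmf th (swap u s) = model_pmf th s.
Proof.
apply: eq_bigr => i _; rewrite !ffunE.
by case: (u i) => //; case: (s.1 i); case: (s.2 i).
Qed.

Lemma zcount_swap u s : zcount (swap u s) =1 zcount s.
Proof. by move=> i; rewrite /zcount !ffunE; case: (u i); rewrite // addnC. Qed.

Lemma swap_of_zcount s t : zcount s =1 zcount t -> t = swap [ffun i => s.1 i != t.1 i] s.
Proof.
move: s t => [x y] [x' y'] st; congr pair; apply/ffunP => i; rewrite !ffunE;
  by move: (st i); rewrite /zcount /=; case: (x i); case: (y i); case: (x' i); case: (y' i).
Qed.

Definition symmetrize (T : sample N -> R) s : R :=
  #|{ffun 'I_N -> bool}|%:R^-1 * \sum_u T (swap u s).

Lemma symmetrize_invariant T : zcount_invariant (symmetrize T).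
Proof.
move=> s t /swap_of_zcount ->; congr (_ * _).
set u0 := [ffun i => _].
have xorK : involutive (fun u => [ffun i => u0 i (+) u i]).
  by move=> u; apply/ffunP => i; rewrite !ffunE addKb.
rewrite [RHS](reindex_inj (inv_inj xorK)); apply: eq_bigr => u _.
by rewrite swap_comp; congr (T (swap _ s)); apply/ffunP => i; rewrite !ffunE addKb.
Qed.

(* Swaps preserve the law and [h], so [E (T h)] is unchanged by averaging [T]
   over them. *)
Lemma Exp_mul_symmetrize th T h : zcount_invariant h ->
  Exp th (fun s => T s * h s) = Exp th (fun s => symmetrize T s * h s).
Proof.
move=> h_inv.
have swap_Exp u : Exp th (fun s => T (swap u s) * h s) = Exp th (fun s => T s * h s).
  rewrite /Exp [RHS](reindex_inj (inv_inj (swapK u))) /=; apply: eq_bigr => s _.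
  by rewrite model_pmf_swap (h_inv (swap u s) s) //; apply: zcount_swap.
have card_neq0 : #|{ffun 'I_N -> bool}|%:R != 0 :> R.
  by rewrite pnatr_eq0 -lt0n; apply/card_gt0P; exists [ffun=> false].
set c := #|{ffun 'I_N -> bool}|%:R : R.
transitivity (c^-1 * \sum_u Exp th (fun s => T (swap u s) * h s)).
  rewrite (eq_bigr _ (fun u _ => swap_Exp u)) sumr_const.
  by rewrite -[_ *+ #|_|]mulr_natl mulKf.
rewrite -Exp_sum -ExpZ; apply: eq_Exp => s.
by rewrite /symmetrize -mulrA mulr_suml.
Qed.

Lemma Exp_symmetrize th T : Exp th (symmetrize T) = Exp th T.
Proof.
have := @Exp_mul_symmetrize th T (fun=> 1) (fun _ _ _ => erefl).
by rewrite (eq_Exp _ (fun s => mulr1 (T s))) (eq_Exp _ (fun s => mulr1 _)) => ->.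
Qed.

End Swaps.

Section Moments.
Variables (R : realType) (N : nat).
Implicit Types (q : 'I_N -> R) (s : sample N).

Definition uncorr q : param R N := (q, fun _ => 0).

Lemma Exp_uncorr (th : param R N) f :
  (forall i, th.2 i = 0) -> Exp th f = Exp (uncorr th.1) f.
Proof.
move=> rho0; apply: eq_bigr => s _; congr (_ * _); apply: eq_bigr => i _.
by rewrite rho0.
Qed.

Definition pair_Exp (p : R) (f : bool -> bool -> R) : R :=
  \sum_(a : bool) \sum_(b : bool) pair_pmf p 0 a b * f a b.

Lemma pair_Exp1 (p : R) : pair_Exp p (fun _ _ => 1) = 1.
Proof. by rewrite /pair_Exp !big_bool /=; ring. Qed.

Lemma sum_sample_prod (F : 'I_N -> bool -> bool -> R) :
  \sum_(s : sample N) \prod_i F i (s.1 i) (s.2 i) =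
  \prod_i \sum_(a : bool) \sum_(b : bool) F i a b.
Proof.
rewrite bigA_distr_bigA /=.
rewrite -(pair_bigA _ (fun f g : {ffun 'I_N -> bool} => \prod_i F i (f i) (g i))).
by apply: eq_bigr => f _; rewrite (bigA_distr_bigA (fun i b => F i (f i) b)).
Qed.

Lemma Exp_prod q (F : 'I_N -> bool -> bool -> R) :
  Exp (uncorr q) (fun s => \prod_i F i (s.1 i) (s.2 i)) =
  \prod_i pair_Exp (q i) (F i).
Proof.
rewrite /Exp -sum_sample_prod; apply: eq_bigr => s _.
by rewrite /model_pmf -big_split.
Qed.

Lemma Exp_prod_seq q (r : seq 'I_N) (F : 'I_N -> bool -> bool -> R) : uniq r ->
  Exp (uncorr q) (fun s => \prod_(i <- r) F i (s.1 i) (s.2 i)) =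
  \prod_(i <- r) pair_Exp (q i) (F i).
Proof.
move=> r_uniq; rewrite big_uniq // big_mkcond.
pose G i := if i \in r then F i else fun _ _ => 1.
transitivity (Exp (uncorr q) (fun s => \prod_i G i (s.1 i) (s.2 i))).
  apply: eq_Exp => s; rewrite big_uniq // big_mkcond.
  by apply: eq_bigr => i _; rewrite /G; case: ifP.
rewrite Exp_prod; apply: eq_bigr => i _; rewrite /G.
by case: ifP => // _; apply: pair_Exp1.
Qed.

(* The law of [zcount s i] is Binomial(2, q i). *)
Definition binom2_Exp (p : R) (g : nat -> R) : R :=
  (1 - p) ^+ 2 * g 0%N + 2 * p * (1 - p) * g 1%N + p ^+ 2 * g 2%N.

Lemma pair_Exp_zcount (p : R) (g : nat -> R) :
  pair_Exp p (fun a b => g (a + b)%N) = binom2_Exp p g.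
Proof. by rewrite /pair_Exp !big_bool /= !(addn0, addn1) /binom2_Exp; ring. Qed.

Lemma Exp_zcount q j (g : nat -> R) :
  Exp (uncorr q) (fun s => g (zcount s j)) = binom2_Exp (q j) g.
Proof.
have := @Exp_prod_seq q [:: j] (fun _ a b => g (a + b)%N) isT.
by rewrite !big_seq1 pair_Exp_zcount => <-; apply: eq_Exp => s; rewrite big_seq1.
Qed.

Lemma Exp_zcount2 q j k (g h : nat -> R) : j != k ->
  Exp (uncorr q) (fun s => g (zcount s j) * h (zcount s k)) =
  binom2_Exp (q j) g * binom2_Exp (q k) h.
Proof.
move=> jk; pose F i a b := (if i == j then g else h) (a + b)%N.
have := @Exp_prod_seq q [:: j; k] F; rewrite /= inE jk => /(_ isT).
rewrite !big_cons !big_nil /F eqxx eq_sym (negbTE jk) !mulr1 !pair_Exp_zcount => <-.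
by apply: eq_Exp => s; rewrite !big_cons big_nil mulr1 eqxx eq_sym (negbTE jk).
Qed.

End Moments.

Section Estimator.
Variables (R : realType) (N : nat).
Implicit Types (q : 'I_N -> R) (s : sample N).

Let zsum s : R := \sum_i (zcount s i)%:R.

Lemma dXY_zcount s : dXY R s = (2 * N%:R)^-1 * zsum s.
Proof.
rewrite /dXY /dX /dY -mulrDr -big_split mulrA -invfM.
by congr (_ * _); apply: eq_bigr => i _; rewrite natrD.
Qed.

Lemma Delta_zcount s : Delta R s = \sum_i (zcount s i == 1)%:R.
Proof.
by apply: eq_bigr => i _; rewrite /zcount /bnat; case: (s.1 i); case: (s.2 i) => /=; ring.
Qed.

Lemma T_estE s : T_est R s =
  (2 * N%:R)^-1 * zsum s - ((2 * N%:R)^-1) ^+ 2 * zsum s ^+ 2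
  - (2 * N%:R)^-1 * (1 - (2 * N%:R)^-1) * \sum_i (zcount s i == 1)%:R.
Proof. by rewrite /T_est dXY_zcount Delta_zcount; ring. Qed.

Lemma T_est_invariant : zcount_invariant (T_est R (N:=N)).
Proof.
move=> s t st; rewrite !T_estE /zsum.
by under eq_bigr do rewrite st; under [in X in _ - _ * X]eq_bigr do rewrite st.
Qed.

Lemma Exp_zsum q : Exp (uncorr q) zsum = 2 * \sum_i q i.
Proof.
rewrite /zsum Exp_sum mulr_sumr; apply: eq_bigr => i _.
by rewrite (Exp_zcount q i (fun n => n%:R)) /binom2_Exp; ring.
Qed.

Lemma Exp_zcount_eq1 q :
  Exp (uncorr q) (fun s => \sum_i (zcount s i == 1)%:R) = \sum_i 2 * q i * (1 - q i).
Proof.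
rewrite Exp_sum; apply: eq_bigr => i _.
by rewrite (Exp_zcount q i (fun n => (n == 1)%:R)) /binom2_Exp /=; ring.
Qed.

Lemma Exp_zcount_mul q i k :
  Exp (uncorr q) (fun s => (zcount s i)%:R * (zcount s k)%:R) =
  4 * q i * q k + (i == k)%:R * (2 * q i * (1 - q i)).
Proof.
have [<-|ik] := eqVneq i k.
  by rewrite (Exp_zcount q i (fun n => n%:R * n%:R)) /binom2_Exp /=; ring.
rewrite (Exp_zcount2 q (fun n => n%:R) (fun n => n%:R) ik) /binom2_Exp /=; ring.
Qed.

Lemma Exp_zsum_sqr q :
  Exp (uncorr q) (fun s => zsum s ^+ 2) =
  4 * (\sum_i q i) ^+ 2 + \sum_i 2 * q i * (1 - q i).
Proof.
have -> : Exp (uncorr q) (fun s => zsum s ^+ 2) =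
    \sum_i \sum_k Exp (uncorr q) (fun s => (zcount s i)%:R * (zcount s k)%:R).
  under eq_bigr do rewrite -Exp_sum; rewrite -Exp_sum.
  by apply: eq_Exp => s; rewrite /zsum expr2 mulr_suml; under eq_bigr do rewrite mulr_sumr.
rewrite expr2 mulr_suml mulr_sumr -big_split; apply: eq_bigr => i _ /=.
under eq_bigr do rewrite Exp_zcount_mul.
have diag c : \sum_k (i == k)%:R * c = c.
  rewrite (bigD1 i) //= eqxx mul1r big1 ?addr0 // => k.
  by rewrite eq_sym => /negbTE ->; rewrite mul0r.
rewrite big_split /= diag !mulr_sumr; congr (_ + _).
by apply: eq_bigr => k _; ring.
Qed.

Lemma sigma2E q : (0 < N)%N ->
  sigma2 (uncorr q) = N%:R^-1 * \sum_i q i ^+ 2 - (N%:R^-1 * \sum_i q i) ^+ 2.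
Proof.
move=> N_gt0; rewrite /sigma2 /mu /=; set m := N%:R^-1 * \sum_i q i.
have -> : \sum_i (q i - m) ^+ 2 = \sum_i q i ^+ 2 - 2 * m * \sum_i q i + N%:R * m ^+ 2.
  have -> : N%:R * m ^+ 2 = \sum_(i < N) m ^+ 2 by rewrite sumr_const card_ord mulr_natl.
  rewrite mulr_sumr -sumrB -big_split /=.
  by apply: eq_bigr => i _; ring.
rewrite /m; field; by rewrite pnatr_eq0 -lt0n.
Qed.

Lemma Exp_T_est q : (0 < N)%N -> Exp (uncorr q) (T_est R (N:=N)) = sigma2 (uncorr q).
Proof.
move=> N_gt0; rewrite (eq_Exp _ T_estE) !ExpB !ExpZ Exp_zsum Exp_zsum_sqr Exp_zcount_eq1.
have -> : \sum_i 2 * q i * (1 - q i) = 2 * \sum_i q i - 2 * \sum_i q i ^+ 2.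
  by rewrite !mulr_sumr -sumrB; apply: eq_bigr => i _; ring.
rewrite sigma2E //; field; by rewrite pnatr_eq0 -lt0n.
Qed.

End Estimator.

Lemma bernstein2_eq0 (R : realFieldType) (x d A B C : R) : d != 0 ->
  (forall v, v \in [:: x; x + d; x - d] ->
     v ^+ 2 * A + v * (1 - v) * B + (1 - v) ^+ 2 * C = 0) ->
  [/\ A = 0, B = 0 & C = 0].
Proof.
move=> d_neq0 f_eq0.
(* [f] is the same polynomial in the monomial basis; its second and first
   differences at [x] isolate the coefficients. *)
pose f v := (A - B + C) * v ^+ 2 + (B - 2 * C) * v + C.
have f0 v : v \in [:: x; x + d; x - d] -> f v = 0 by move=> /f_eq0 <-; rewrite /f; ring.
have fx : f x = 0 by rewrite f0 ?inE ?eqxx.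
have fxd : f (x + d) = 0 by rewrite f0 ?inE ?eqxx ?orbT.
have fxd' : f (x - d) = 0 by rewrite f0 ?inE ?eqxx ?orbT.
have cancel_nz (a k : R) : k != 0 -> a * k = 0 -> a = 0.
  by move=> k_neq0 /eqP; rewrite mulf_eq0 (negbTE k_neq0) orbF => /eqP.
have a_eq0 : A - B + C = 0.
  apply: (cancel_nz _ (2 * d ^+ 2)); first by rewrite mulf_neq0 ?expf_neq0 ?pnatr_eq0.
  transitivity (f (x + d) + f (x - d) - 2 * f x); first by rewrite /f; ring.
  by rewrite fx fxd fxd'; ring.
have b_eq0 : B - 2 * C = 0.
  apply: (cancel_nz _ (2 * d)); first by rewrite mulf_neq0 ?pnatr_eq0.
  transitivity (f (x + d) - f (x - d) - (A - B + C) * (4 * x * d)); first by rewrite /f; ring.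
  by rewrite fxd fxd' a_eq0; ring.
have c_eq0 : C = 0 by move: fx; rewrite /f a_eq0 b_eq0 !mul0r !add0r.
split; lra.
Qed.

Section Completeness.
Variables (R : realType) (N : nat) (p0 : 'I_N -> R) (eps : R).
Hypothesis eps_gt0 : 0 < eps.
Implicit Types (q : 'I_N -> R) (s t : sample N) (F : sample N -> R).

Definition in_box q := forall i, `|q i - p0 i| < eps.

Definition Exp_upto k q F : R :=
  \sum_(s : sample N) (\prod_(i < N | (i < k)%N) pair_pmf (q i) 0 (s.1 i) (s.2 i)) * F s.

Definition agree_sum k t F : R :=
  \sum_(s : sample N) (\prod_(i < N | (i < k)%N) (zcount s i == zcount t i)%:R) * F s.

Definition zslice (j : 'I_N) (c : nat) F s : R := (zcount s j == c)%:R * F s.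

Lemma prod_upto_succ k (lt_kN : (k < N)%N) (f : 'I_N -> R) :
  \prod_(i < N | (i < k.+1)%N) f i = f (Ordinal lt_kN) * \prod_(i < N | (i < k)%N) f i.
Proof.
rewrite (bigD1 (Ordinal lt_kN)) //=; congr (_ * _); apply: eq_bigl => i.
by rewrite ltnS -val_eqE /= andbC -ltn_neqAle.
Qed.

Lemma Exp_upto_succ k (lt_kN : (k < N)%N) q F (j := Ordinal lt_kN) :
  Exp_upto k.+1 q F = q j ^+ 2 * Exp_upto k q (zslice j 2 F)
    + q j * (1 - q j) * Exp_upto k q (zslice j 1 F)
    + (1 - q j) ^+ 2 * Exp_upto k q (zslice j 0 F).
Proof.
rewrite /Exp_upto !mulr_sumr -!big_split /=; apply: eq_bigr => s _.
rewrite prod_upto_succ /zslice /zcount.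
by case: (s.1 j); case: (s.2 j) => /=; ring.
Qed.

Lemma agree_sum_succ k (lt_kN : (k < N)%N) t F (j := Ordinal lt_kN) :
  agree_sum k.+1 t F = agree_sum k t (zslice j (zcount t j) F).
Proof. by apply: eq_bigr => s _; rewrite prod_upto_succ /zslice -mulrA mulrCA. Qed.

Lemma Exp_upto_eta k (j : 'I_N) q F v : (k <= j)%N ->
  Exp_upto k [eta q with j |-> v] F = Exp_upto k q F.
Proof.
move=> le_kj; apply: eq_bigr => s _; congr (_ * _); apply: eq_bigr => i lt_ik /=.
by case: eqP => // ij; move: (leq_trans lt_ik le_kj); rewrite ij ltnn.
Qed.

Lemma in_box_eta q (j : 'I_N) v :
  in_box q -> `|v - p0 j| < eps -> in_box [eta q with j |-> v].
Proof. by move=> q_box v_near i /=; case: eqP => [->|_]. Qed.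

(* Exp_upto k.+1 is quadratic in q j, whereas the three Exp_upto k on the
   right of Exp_upto_succ do not depend on q j: letting q j take three values
   in the box kills each of them. *)
Lemma agree_sum_eq0 k : (k <= N)%N -> forall F,
  (forall q, in_box q -> Exp_upto k q F = 0) -> forall t, agree_sum k t F = 0.
Proof.
elim: k => [|k IHk] le_kN F Exp_eq0 t.
  rewrite -(Exp_eq0 p0) => [|i]; last by rewrite subrr normr0.
  by apply: eq_bigr => s _; rewrite !big_pred0.
rewrite agree_sum_succ; apply: IHk => [|q q_box]; first exact: ltnW.
set j := Ordinal le_kN.
have [] := @bernstein2_eq0 R (p0 j) (eps / 2) (Exp_upto k q (zslice j 2 F))
    (Exp_upto k q (zslice j 1 F)) (Exp_upto k q (zslice j 0 F)).
- by rewrite gt_eqF ?divr_gt0.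
- move=> v v_in; rewrite -(Exp_eq0 [eta q with j |-> v]).
    by rewrite Exp_upto_succ /= eqxx !Exp_upto_eta.
  apply: in_box_eta => //.
  have eps2 : `|eps / 2| < eps.
    by rewrite gtr0_norm ?divr_gt0 // ltr_pdivrMr // ltr_pMr // ltr1n.
  move: v_in; rewrite !inE => /or3P[] /eqP ->; first by rewrite subrr normr0.
    by rewrite addrC addKr.
  by rewrite addrC addKr normrN.
have : (zcount t j <= 2)%N by rewrite /zcount; case: (t.1 j); case: (t.2 j).
by case: (zcount t j) => [|[|[|]]].
Qed.

Lemma complete_zcount F : zcount_invariant F ->
  (forall q, in_box q -> Exp (uncorr q) F = 0) -> F =1 (fun=> 0).
Proof.
move=> F_inv Exp_eq0 t.
pose A := [pred s | [forall i, zcount s i == zcount t i]].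
have agree_eq0 : agree_sum N t F = 0.
  apply: agree_sum_eq0 => // q q_box; rewrite -(Exp_eq0 q q_box).
  by apply: eq_bigr => s _; congr (_ * _); apply: eq_bigl => i; rewrite ltn_ord.
have agreeE : agree_sum N t F = F t *+ #|A|.
  rewrite -sumr_const big_mkcond; apply: eq_bigr => s _ /=.
  case: (boolP (s \in A)) => [/forallP st | /forallPn [i st]].
    rewrite big1 ?mul1r => [|i _]; last by rewrite (eqP (st i)) eqxx.
    by apply: F_inv => i; apply/eqP.
  by rewrite (bigD1 i) ?ltn_ord //= (negbTE st) !mul0r.
have A_gt0 : (0 < #|A|)%N by apply/card_gt0P; exists t; apply/forallP.
by apply/eqP; move: agree_eq0 => /eqP; rewrite agreeE mulrn_eq0 eqn0Ngt A_gt0.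
Qed.

Lemma symmetrize_eq_T_est (T : sample N -> R) : (0 < N)%N ->
  (forall q, in_box q -> Exp (uncorr q) T = sigma2 (uncorr q)) ->
  symmetrize T =1 T_est R (N:=N).
Proof.
move=> N_gt0 T_unbiased s; apply/eqP; rewrite -subr_eq0; apply/eqP; move: s.
apply: complete_zcount => [s t st | q q_box].
  by rewrite (symmetrize_invariant T st); congr (_ - _); apply: T_est_invariant.
by rewrite (ExpB _ (symmetrize T)) Exp_symmetrize T_unbiased // Exp_T_est // subrr.
Qed.

End Completeness.

Theorem corollary2 (R : realType) (N : nat) (Theta : param R N -> Prop) :
  (0 < N)%N ->
  (forall th, Theta th -> in_Rspace th) ->
  (forall th, Theta th -> forall i, th.2 i = 0) ->
  nondegenerate_param Theta ->
  UMVU Theta (T_est R (N:=N)) (@sigma2 R N).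
Proof.
move=> N_gt0 Theta_R Theta_rho0 [p0 [eps [eps_gt0 box_Theta]]].
have T_unbiased : unbiased Theta (T_est R (N:=N)) (@sigma2 R N).
  by move=> th /Theta_rho0 rho0; rewrite (Exp_uncorr _ rho0) Exp_T_est.
split=> // T' T'_unbiased th Theta_th.
have symT' : symmetrize T' =1 T_est R (N:=N).
  by apply: (symmetrize_eq_T_est eps_gt0) => // q /box_Theta; apply: T'_unbiased.
apply: Var_le_of_orthogonal => [s||].
- exact/model_pmf_ge0/Theta_R.
- by rewrite T'_unbiased // T_unbiased.
- rewrite Exp_mul_symmetrize => [|s t st]; last by congr (_ - _); apply: T_est_invariant.
  by apply: eq_Exp => s; rewrite symT'.
Qed.
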